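(* Let $G$ be a connected graph with detour sequence $D: d_1,d_2,\ldots,d_n$. Then $\max_{2\le i\le n}\{d_i-d_{i-1}\} \le \left\lfloor \frac{\tau(G)}{2} \right\rfloor$.
   Context: All graphs are finite and simple. The order of a path is its number of vertices. For a vertex $v$ of $G$, $\tau(v)$ is the order of a longest path in $G$ having $v$ as an endvertex, and $\tau(G)$ is the order of a longest path in $G$. The detour sequence of $G$ is the nondecreasing sequence $d_1\le d_2\le\cdots\le d_n$ of the values $\tau(v)$, $v\in V(G)$, where $n=|V(G)|$. The quantity $\max_{2\le i\le n}\{d_i-d_{i-1}\}$ is called the maximum gap of $D$. *)

From mathcomp Require Import all_boot.
Set Implicit Arguments. Unset Strict Implicit. Unset Printing Implicit Defensive.

Definition simple_graph (T : finType) (e : rel T) : Prop :=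
  symmetric e /\ irreflexive e.

Definition connected_graph (T : finType) (e : rel T) : Prop :=
  forall x y : T, connect e x y.

(* A path of G with endvertex v: the vertex sequence v :: s, duplicate-free,
   consecutive vertices adjacent.  Its order is size (v :: s). *)
Definition gpath_from (T : finType) (e : rel T) (v : T) (s : seq T) : bool :=
  uniq (v :: s) && path e v s.

(* tau v : the order of a longest path in G having v as an endvertex.
   Every path has order <= #|T|, so the max ranges over k < #|T|.+1. *)
Definition tau (T : finType) (e : rel T) (v : T) : nat :=
  \max_(k < #|T|.+1 |
        [exists s : (k.-1).-tuple T, (0 < k) && gpath_from e v s]) k.

Definition tauG (T : finType) (e : rel T) : nat := \max_(v : T) tau e v.

Definition detour_seq (T : finType) (e : rel T) : seq nat :=
  sort leq [seq tau e v | v <- enum T].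

(* Maximum gap: max over 2 <= i <= n of d_i - d_{i-1}
   (0-indexed: max over 1 <= i < n of d`_i - d`_(i-1)). *)
Definition max_gap (d : seq nat) : nat :=
  \max_(1 <= i < size d) (nth 0 d i - nth 0 d i.-1).

From mathcomp Require Import all_boot.
From mathcomp Require Import zify.

Set Implicit Arguments.
Unset Strict Implicit.
Unset Printing Implicit Defensive.

(* By connectivity every vertex v reaches a longest path P of G, of order
   tau(G).  Walking from v until P is first met and then following P in the
   direction of its longer part yields a path ending at v of order at least
   tau(G)/2.  Hence every detour value lies between tau(G) - floor(tau(G)/2)
   and tau(G), and no two of them differ by more than floor(tau(G)/2). *)

Lemma max_gap_le (d : seq nat) (b : nat) :
  {in d &, forall x y, x - y <= b} -> max_gap d <= b.
Proof.
move=> diff_le; apply/bigmax_leqP_seq => i; rewrite mem_index_iota.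
case/andP=> i_gt0 i_lt _; apply: diff_le; apply: mem_nth => //.
exact: leq_ltn_trans (leq_pred i) i_lt.
Qed.

Section Detour.
Variables (T : finType) (e : rel T).

Lemma mem_detour_seq x : x \in detour_seq e -> exists v, x = tau e v.
Proof. by rewrite mem_sort => /mapP [v _ ->]; exists v. Qed.

Lemma tau_ge_gpath v s : gpath_from e v s -> (size s).+1 <= tau e v.
Proof.
move=> vs_path; have s_lt : (size s).+1 < #|T|.+1.
  case/andP: vs_path => vs_uniq _.
  by rewrite ltnS -[(size s).+1]/(size (v :: s)) -(card_uniqP vs_uniq) max_card.
apply: (@leq_bigmax_cond _ _ (@nat_of_ord _) (Ordinal s_lt)).
by apply/existsP; exists (in_tuple s).
Qed.

Lemma tau_gpath v : exists s, gpath_from e v s /\ tau e v = (size s).+1.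
Proof.
have one_lt : 1 < #|T|.+1 by rewrite ltnS; apply/card_gt0P; exists v.
pose P (k : 'I_#|T|.+1) :=
  [exists s : (k.-1).-tuple T, (0 < k) && gpath_from e v s].
have P1 : P (Ordinal one_lt) by apply/existsP; exists [tuple].
rewrite /tau (bigmax_eq_arg (Ordinal one_lt) P1).
case: arg_maxnP => // k /existsP [s /andP [k_gt0 vs_path]] _.
by exists s; rewrite size_tuple prednK.
Qed.

Lemma tau_le_tauG v : tau e v <= tauG e.
Proof. exact: (@leq_bigmax _ (fun v => tau e v)). Qed.

Lemma tauG_gpath (v : T) : exists w s, gpath_from e w s /\ tauG e = (size s).+1.
Proof.
rewrite /tauG (bigmax_eq_arg v) //.
have [s [ws_path ->]] := tau_gpath [arg max_(w > v) tau e w].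
by exists [arg max_(w > v) tau e w], s.
Qed.

Hypothesis e_sym : symmetric e.

Lemma long_subpath_from (P : seq T) x : uniq P -> sorted e P -> x \in P ->
  exists r, [/\ gpath_from e x r, {subset r <= P} & size P <= 2 * (size r).+1].
Proof.
move=> P_uniq P_sorted xP; case/splitPr: xP P_uniq P_sorted => A B.
rewrite sorted_cat_cons => P_uniq /andP [A_path B_path].
have xB_uniq : uniq (x :: B) by move: P_uniq; rewrite cat_uniq => /and3P [].
have Ax_uniq : uniq (rcons A x).
  by move: P_uniq; rewrite -cat_rcons cat_uniq => /andP [].
have [le_AB | lt_BA] := leqP (size A) (size B).
  exists B; split.
  - by rewrite /gpath_from xB_uniq B_path.
  - by move=> z zB; rewrite mem_cat inE zB !orbT.
  - by rewrite size_cat mul2n -addnn leq_add2r leqW.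
exists (rev A); split.
- rewrite /gpath_from -rev_rcons rev_uniq Ax_uniq /= (eq_path e_sym).
  by rewrite -rev_sorted rev_rcons in A_path.
- by move=> z; rewrite mem_rev mem_cat => ->.
- by rewrite size_cat size_rev mul2n -addnn leq_add ?leqW.
Qed.

(* The subset clause is the induction invariant: it keeps x out of the path
   built from the rest of the walk. *)
Lemma long_path_along_walk (P : seq T) : uniq P -> sorted e P ->
  forall q x, path e x q -> uniq (x :: q) -> last x q \in P ->
  exists r, [/\ gpath_from e x r, {subset r <= q ++ P}
            & size P <= 2 * (size r).+1].
Proof.
move=> P_uniq P_sorted; elim=> [|y q IHq] x xq_path xq_uniq xq_last.
  have [r [xr_path rP size_le]] := long_subpath_from P_uniq P_sorted xq_last.
  by exists r.
have [xP | xNP] := boolP (x \in P).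
  have [r [xr_path rP size_le]] := long_subpath_from P_uniq P_sorted xP.
  by exists r; split=> // z /rP zP; rewrite mem_cat zP orbT.
case/andP: xq_path => exy yq_path.
case/andP: xq_uniq; rewrite in_cons negb_or => /andP [x_neq_y xNq] yq_uniq.
have [r [yr_path r_sub size_le]] := IHq y yq_path yq_uniq xq_last.
have xNyr : x \notin y :: r.
  rewrite in_cons negb_or x_neq_y /=; apply/negP => /r_sub.
  by rewrite mem_cat (negbTE xNq) (negbTE xNP).
case/andP: yr_path => yr_uniq yr_path.
exists (y :: r); split.
- by rewrite /gpath_from cons_uniq xNyr yr_uniq /= exy.
- move=> z /predU1P [-> | /r_sub zqP]; first exact: mem_head.
  by rewrite cat_cons in_cons zqP orbT.
- by apply: leq_trans size_le _; rewrite leq_mul2l ltnW.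
Qed.

Lemma tauG_le_double_tau v : connected_graph e -> tauG e <= 2 * tau e v.
Proof.
move=> e_conn; have [w [s [ws_path ->]]] := tauG_gpath v.
case/andP: ws_path => ws_uniq ws_sorted.
have /connectP [p vp_path w_last] := e_conn v w.
case: (shortenP vp_path) w_last => q vq_path vq_uniq _ w_last.
have vq_last : last v q \in w :: s by rewrite -w_last mem_head.
have [r [vr_path _ size_le]] :=
  long_path_along_walk ws_uniq ws_sorted vq_path vq_uniq vq_last.
by apply: leq_trans size_le _; rewrite leq_mul2l tau_ge_gpath.
Qed.

End Detour.

Theorem corollary1p5 (T : finType) (e : rel T) :
  simple_graph e -> connected_graph e ->
  max_gap (detour_seq e) <= (tauG e)./2.
Proof.
move=> [e_sym _] e_conn; apply: max_gap_le.
move=> _ _ /mem_detour_seq [v ->] /mem_detour_seq [u ->].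
have := tau_le_tauG e v; have := tauG_le_double_tau e_sym u e_conn; lia.
Qed.
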